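(* Let $G=(V,E,w)$ be a finite undirected graph with positive vertex weights and let $IC, C\subseteq V$. (a) Suppose $IC\subseteq VC_w$ for some minimum weight vertex cover $VC_w$ of $G$. Then $w(p)\le \alpha_w(G[N(p)\setminus IC])$ for every $p\in IC$. Moreover, if $v\in IC$ and $u\in N^2(v)$ satisfy $w(v)>\alpha_w(G[N(v)\setminus(IC\cup N(u))])$, then $IC\cup\{u\}\subseteq VC_w$. (b) Suppose $C$ is contained in every minimum weight vertex cover of $G$. Then $w(p)<\alpha_w(G[N(p)\setminus C])$ for every $p\in C$. Moreover, if $v\in C$ and $u\in N^2(v)$ satisfy $w(v)\ge\alpha_w(G[N(v)\setminus(C\cup N(u))])$, then $C\cup\{u\}$ is contained in every minimum weight vertex cover of $G$.
   Context: $G=(V,E,w)$ is a finite simple undirected graph with $w:V\to\mathbb{R}^{+}$; $w(S)=\sum_{v\in S}w(v)$. A vertex cover is a set $VC\subseteq V$ meeting every edge; a minimum weight vertex cover (MWVC) is one of minimum total weight. $N(v)$ is the neighbour set of $v$; $N^2(v)$ is the set of vertices at graph distance exactly $2$ from $v$. For $S\subseteq V$, $G[S]$ is the induced subgraph and $\alpha_w(G[S])$ is the maximum weight of an independent set in $G[S]$, with $\alpha_w(G[\emptyset])=0$. *)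

From HB Require Import structures.
From mathcomp Require Import all_boot all_order all_algebra.
Set Implicit Arguments. Unset Strict Implicit. Unset Printing Implicit Defensive.
Import Order.TTheory GRing.Theory Num.Theory.
Local Open Scope ring_scope.

Definition simple_graph (T : finType) (e : rel T) : Prop :=
  symmetric e /\ irreflexive e.

Definition weight (R : realFieldType) (T : finType) (w : T -> R) (S : {set T}) : R :=
  \sum_(x in S) w x.

Definition is_vc (T : finType) (e : rel T) (S : {set T}) : Prop :=
  forall x y, e x y -> x \in S \/ y \in S.

Definition is_mwvc (R : realFieldType) (T : finType) (e : rel T) (w : T -> R)
  (S : {set T}) : Prop :=
  is_vc e S /\ forall S', is_vc e S' -> weight w S <= weight w S'.

Definition indepb (T : finType) (e : rel T) (I : {set T}) : bool :=
  [forall x in I, forall y in I, ~~ e x y].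

(* alpha_w(G[S]) : max weight of an independent set contained in S
   (independent sets of G[S] are exactly independent sets of G inside S);
   alpha_w(G[emptyset]) = 0 since the empty set is the only candidate. *)
Definition alpha_w (R : realFieldType) (T : finType) (e : rel T) (w : T -> R)
  (S : {set T}) : R :=
  \big[Num.max/0]_(I in powerset S | indepb e I) weight w I.

Definition nbhd (T : finType) (e : rel T) (v : T) : {set T} := [set u | e v u].

Definition nbhd2 (T : finType) (e : rel T) (v : T) : {set T} :=
  [set u | [&& u != v, ~~ e v u & [exists x, e v x && e x u]]].

From HB Require Import structures.
From mathcomp Require Import all_boot all_order all_algebra.
From mathcomp Require Import lra.
Import Order.TTheory GRing.Theory Num.Theory.
Local Open Scope ring_scope.
Set Implicit Arguments.
Unset Strict Implicit.

(* Exchange argument: if S is a vertex cover and v is in S, then replacing v by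
   its neighbours outside S is again a vertex cover, so for a minimum one
   w v <= w(N(v) \ S); equality would give a minimum cover avoiding v.  As S is a
   cover, N(v) \ S is independent, and it avoids every vertex of S, in particular
   IC and, when u is not in S, all of N(u); hence w(N(v) \ S) is bounded by the
   alpha_w terms of the statement, which yields all four claims. *)

Section VertexCoverExchange.
Variables (R : realFieldType) (T : finType) (e : rel T) (w : T -> R).

Lemma weight_setD1U (S D : {set T}) v : v \in S -> [disjoint S & D] ->
  weight w (S :\ v :|: D) = weight w S - w v + weight w D.
Proof.
move=> vS dSD; rewrite /weight (eq_bigl [predU S :\ v & D]); last first.
  by move=> x; rewrite !inE.
rewrite bigU /=; last by apply: disjointWl dSD; apply: subsetDl.
by rewrite (big_setD1 v vS) /= [w v + _]addrC addrK.
Qed.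

Lemma disjoint_setD (S A : {set T}) : [disjoint S & A :\: S].
Proof. by rewrite -setI_eq0 setIDA setIC -setIDA setDv setI0. Qed.

Lemma is_vc_exchange (S : {set T}) v : simple_graph e -> is_vc e S ->
  is_vc e (S :\ v :|: (nbhd e v :\: S)).
Proof.
move=> [sym irr] vcS x y; rewrite !inE.
have [-> evy | xv] := eqVneq x v.
  have yv : y != v by apply: contraTneq evy => ->; rewrite irr.
  by right; rewrite yv evy; case: (y \in S).
have [-> exv | yv exy] := eqVneq y v.
  by left; rewrite sym exv; case: (x \in S).
by case: (vcS x y exy) => ->; [left | right]; rewrite ?orbT.
Qed.

Lemma nbhd_subset_vc (S : {set T}) u : is_vc e S -> u \notin S ->
  nbhd e u \subset S.
Proof.
move=> vcS uS; apply/subsetP=> y; rewrite inE => euy.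
by case: (vcS u y euy) => // uS'; rewrite uS' in uS.
Qed.

Lemma indepb_setD_vc (S A : {set T}) : is_vc e S -> indepb e (A :\: S).
Proof.
move=> vcS; apply/forallP=> x; apply/implyP=> xA; apply/forallP=> y.
apply/implyP=> yA; apply/negP=> exy; move: xA yA; rewrite !inE.
by case: (vcS x y exy) => ->.
Qed.

Lemma alpha_w_ge (S I : {set T}) : I \subset S -> indepb e I ->
  weight w I <= alpha_w e w S.
Proof.
by move=> IS indI; apply: le_bigmax_cond; rewrite powersetE IS indI.
Qed.

Lemma weight_nbhd_setD_vc_le_alpha (S B : {set T}) v :
  is_vc e S -> B \subset S ->
  weight w (nbhd e v :\: S) <= alpha_w e w (nbhd e v :\: B).
Proof.
move=> vcS BS; apply: alpha_w_ge; last exact: indepb_setD_vc.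
by apply: setDS.
Qed.

Lemma mwvc_exists : exists S, is_mwvc e w S.
Proof.
pose vcb (S : {set T}) := [forall x, forall y, e x y ==> (x \in S) || (y \in S)].
have vcbP S : reflect (is_vc e S) (vcb S).
  apply: (iffP forallP) => [vcS x y exy | vcS x].
    by move/forallP/(_ y)/implyP/(_ exy)/orP: (vcS x).
  by apply/forallP=> y; apply/implyP=> exy; apply/orP; apply: vcS.
have vcbT : vcb setT by apply/forallP=> x; apply/forallP=> y; rewrite !inE implybT.
case: (arg_minP (weight w) vcbT) => S /vcbP vcS Smin.
by exists S; split=> // S' /vcbP /Smin.
Qed.

Section MinimumCover.
Hypothesis He : simple_graph e.
Variable S : {set T}.
Hypothesis mwS : is_mwvc e w S.

Lemma mwvc_weight_le_nbhd v : v \in S -> w v <= weight w (nbhd e v :\: S).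
Proof.
move=> vS; have := mwS.2 _ (is_vc_exchange v He mwS.1).
by rewrite weight_setD1U ?disjoint_setD //; lra.
Qed.

Lemma mwvc_exchange v : v \in S -> weight w (nbhd e v :\: S) <= w v ->
  exists2 S', is_mwvc e w S' & v \notin S'.
Proof.
move=> vS le_nv; exists (S :\ v :|: (nbhd e v :\: S)); last first.
  by rewrite !inE eqxx vS.
split; first exact: is_vc_exchange v He mwS.1.
move=> S' vcS'; apply: le_trans (mwS.2 _ vcS').
by rewrite weight_setD1U ?disjoint_setD //; lra.
Qed.

Lemma mem_all_mwvc_weight_lt_nbhd v :
  (forall S', is_mwvc e w S' -> v \in S') -> w v < weight w (nbhd e v :\: S).
Proof.
move=> vall; rewrite ltNge; apply/negP=> le_nv.
by have [S' /vall vS' /negP] := mwvc_exchange (vall _ mwS) le_nv.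
Qed.

End MinimumCover.
End VertexCoverExchange.

Theorem theorem2p3 (R : realFieldType) (T : finType) (e : rel T) (w : T -> R)
  (He : simple_graph e) (Hw : forall x, 0 < w x) (IC C : {set T}) :
  (forall VC : {set T}, is_mwvc e w VC -> IC \subset VC ->
     (forall p, p \in IC -> w p <= alpha_w e w (nbhd e p :\: IC)) /\
     (forall v u, v \in IC -> u \in nbhd2 e v ->
        alpha_w e w (nbhd e v :\: (IC :|: nbhd e u)) < w v ->
        IC :|: [set u] \subset VC)) /\
  ((forall VC : {set T}, is_mwvc e w VC -> C \subset VC) ->
     (forall p, p \in C -> w p < alpha_w e w (nbhd e p :\: C)) /\
     (forall v u, v \in C -> u \in nbhd2 e v ->
        alpha_w e w (nbhd e v :\: (C :|: nbhd e u)) <= w v ->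
        forall VC : {set T}, is_mwvc e w VC -> C :|: [set u] \subset VC)).
Proof.
split=> [VC mwVC ICVC | Call].
  split=> [p pIC | v u vIC _ lt_alpha].
    apply: le_trans (mwvc_weight_le_nbhd He mwVC (subsetP ICVC p pIC)) _.
    exact: weight_nbhd_setD_vc_le_alpha mwVC.1 ICVC.
  rewrite subUset ICVC sub1set; apply: contraLR lt_alpha => uVC; rewrite -leNgt.
  apply: le_trans (mwvc_weight_le_nbhd He mwVC (subsetP ICVC v vIC)) _.
  by apply: weight_nbhd_setD_vc_le_alpha mwVC.1 _; rewrite subUset ICVC (nbhd_subset_vc mwVC.1 uVC).
have mem_all p : p \in C -> forall VC, is_mwvc e w VC -> p \in VC.
  by move=> pC VC /Call /subsetP; apply.
split=> [p pC | v u vC _ le_alpha VC mwVC].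
  have [VC mwVC] := mwvc_exists e w.
  apply: lt_le_trans (mem_all_mwvc_weight_lt_nbhd He mwVC (mem_all p pC)) _.
  exact: weight_nbhd_setD_vc_le_alpha mwVC.1 (Call _ mwVC).
rewrite subUset Call // sub1set; apply: contraLR le_alpha => uVC; rewrite -ltNge.
apply: lt_le_trans (mem_all_mwvc_weight_lt_nbhd He mwVC (mem_all v vC)) _.
by apply: weight_nbhd_setD_vc_le_alpha mwVC.1 _; rewrite subUset Call ?(nbhd_subset_vc mwVC.1 uVC).
Qed.
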